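(* There exist universal constants $0<\kappa_1<\kappa_2<\infty$ and $c,C>0$ such that the following holds. Let $\{(a_i,b_i,m_i,n_i):i\in\mathbb{Z}\}$ be a positive ABMN solution with battlefield index $k$. Then there exist $A,F\in[\kappa_1,\kappa_2]$ such that for all $j\ge k$, $a_j=(m_k-m_{k-1})\cdot 2F\cdot 2^{2(j-k)}\exp\{-2\cdot 2^{j-k}A\}(1+\varepsilon^{(1)}_j)$, $b_j=(m_k-m_{k-1})\cdot 4F\cdot 2^{2(j-k)}\exp\{-3\cdot 2^{j-k}A\}(1+\varepsilon^{(2)}_j)$, $m_j-m_{j-1}=(m_k-m_{k-1})\cdot F\cdot 2^{2(j-k)}\exp\{-2^{j-k}A\}(1+\varepsilon^{(3)}_j)$, $n_{j-1}-n_j=(m_k-m_{k-1})\cdot 2F\cdot 2^{2(j-k)}\exp\{-2^{j-k+1}A\}(1+\varepsilon^{(4)}_j)$, where $|\varepsilon^{(r)}_j|\le C\exp\{-c\,2^{j-k}\}$ for $r=1,2,3,4$.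
   Context: ABMN system on $\mathbb{Z}$: real variables $a_i,b_i\ge0$, $m_i,n_i$ with, for all $i\in\mathbb{Z}$, $(a_i+b_i)(m_i+a_i)=a_im_{i+1}+b_im_{i-1}$, $(a_i+b_i)(n_i+b_i)=a_in_{i+1}+b_in_{i-1}$, $(a_i+b_i)^2=b_i(m_{i+1}-m_{i-1})$, $(a_i+b_i)^2=a_i(n_{i-1}-n_{i+1})$. A solution is positive if all $a_i,b_i>0$ (then $m_i$ is strictly increasing and $n_i$ strictly decreasing). For such a solution set $\phi_i=\frac{n_{i-1}-n_i}{m_i-m_{i-1}}$; the battlefield index is the unique $k\in\mathbb{Z}$ with $\phi_k\in(1/3,3]$. ''Universal'' means independent of the solution. *)

From Stdlib Require Import Reals ZArith.
Open Scope R_scope.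

Definition ABMN_solution (a b m n : Z -> R) : Prop :=
  forall i : Z,
    0 <= a i /\ 0 <= b i /\
    (a i + b i) * (m i + a i) = a i * m (i + 1)%Z + b i * m (i - 1)%Z /\
    (a i + b i) * (n i + b i) = a i * n (i + 1)%Z + b i * n (i - 1)%Z /\
    (a i + b i) ^ 2 = b i * (m (i + 1)%Z - m (i - 1)%Z) /\
    (a i + b i) ^ 2 = a i * (n (i - 1)%Z - n (i + 1)%Z).

Definition positive_ABMN_solution (a b m n : Z -> R) : Prop :=
  ABMN_solution a b m n /\ (forall i : Z, 0 < a i /\ 0 < b i).

Definition phi (m n : Z -> R) (i : Z) : R :=
  (n (i - 1)%Z - n i) / (m i - m (i - 1)%Z).

Definition in_battlefield_range (x : R) : Prop := 1 / 3 < x /\ x <= 3.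

Definition battlefield_index (m n : Z -> R) (k : Z) : Prop :=
  in_battlefield_range (phi m n k) /\
  (forall k' : Z, in_battlefield_range (phi m n k') -> k' = k).

Definition pow2Z (d : Z) : R := 2 ^ (Z.to_nat d).

From Stdlib Require Import Reals ZArith Lra Lia Psatz.
Open Scope R_scope.

(* With [r i = b (k + i) / a (k + i)], the ABMN equations collapse to the closed recursion
   [r (i+1) (1 + 2 r (i+1)) (2 + r i) = r i ^ 2] together with
   [a (k+i+1) (1 + 2 r (i+1)) = a (k+i) r i ^ 2], while the increments of [m] and [n]
   are [a ^ 2 / b] and [a + 2 b]; the battlefield condition [phi k = r 0 + 2 r 0 ^ 2]
   places [r 0] in [(1/5, 1]].  Hence [ln (r i / 2)] doubles at each step up to a defect
   of size [O (r i)] = [O (2 ^ (- 2 ^ i))], so [ln (r i) = ln 2 - 2 ^ i A + O (2 ^ (- 2 ^ i))],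
   and summing the logarithmic recursion for [a] gives
   [ln (a (k+i) / D) = lam + 2 i ln 2 - 2 ^ (i+1) A + O (2 ^ (- 2 ^ i))].
   Both limits [A] and [lam] come from nested intervals around a sequence whose
   increments decay geometrically; the four asymptotic formulas then follow with
   [F = exp lam / 2]. *)

Lemma exp_le x y : x <= y -> exp x <= exp y.
Proof. intros [Hlt|<-]; [left; apply exp_increasing|]; lra. Qed.

Lemma ln_le x y : 0 < x -> x <= y -> ln x <= ln y.
Proof. intros Hx [Hlt|<-]; [left; apply ln_increasing|]; lra. Qed.

Lemma ln_le_sub1 x : 0 < x -> ln x <= x - 1.
Proof. intros Hx. pose proof (exp_ineq1_le (ln x)) as H. rewrite exp_ln in H; lra. Qed.

Lemma ln_1p_bounds x : 0 <= x -> 0 <= ln (1 + x) <= x.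
Proof.
  intros Hx. split.
  - rewrite <- ln_1. apply ln_le; lra.
  - pose proof (ln_le_sub1 (1 + x)). lra.
Qed.

Lemma ln2_bounds : / 2 <= ln 2 <= 1.
Proof. pose proof ln_lt_2. pose proof (ln_le_sub1 2). lra. Qed.

Lemma Rabs_exp_sub1_le x : Rabs (exp x - 1) <= Rabs x * exp (Rabs x).
Proof.
  assert (Hinv : exp x * exp (- x) = 1) by (rewrite <- exp_plus, Rplus_opp_r; apply exp_0).
  pose proof (exp_ineq1_le x); pose proof (exp_ineq1_le (- x)).
  pose proof (exp_pos x); pose proof (exp_pos (- x)).
  destruct (Rle_or_lt 0 x) as [Hx|Hx].
  - rewrite (Rabs_pos_eq x), Rabs_pos_eq by nra. nra.
  - assert (exp x <= 1) by nra.
    rewrite (Rabs_left x), Rabs_left1 by lra. nra.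
Qed.

Lemma Rabs_exp_sub1_le_bound x d M :
  Rabs x <= d -> d <= M -> Rabs (exp x - 1) <= exp M * d.
Proof.
  intros Hx HM. pose proof (Rabs_exp_sub1_le x).
  pose proof (exp_le _ _ (Rle_trans _ _ _ Hx HM)).
  pose proof (Rabs_pos x); pose proof (exp_pos (Rabs x)). nra.
Qed.

Lemma nested_intervals (M N : nat -> R) :
  (forall i, M i <= M (S i)) -> (forall i, N (S i) <= N i) -> (forall i, M i <= N i) ->
  exists l, forall i, M i <= l <= N i.
Proof.
  intros HM HN HMN.
  assert (Hsep : forall i j, M i <= N j).
  { intros i j. destruct (Nat.le_ge_cases i j) as [Hij|Hji].
    - pose proof (tech9 M HM i j Hij). specialize (HMN j). lra.
    - pose proof (tech9 (opp_seq N) (fun p => Ropp_le_contravar _ _ (HN p)) j i Hji) as H.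
      unfold opp_seq in H. specialize (HMN i). lra. }
  destruct (completeness (fun x => exists i, x = M i)) as [l [Hub Hlub]].
  - exists (N 0%nat). intros x [i ->]. apply Hsep.
  - exists (M 0%nat), 0%nat. reflexivity.
  - exists l. intros i. split.
    + apply Hub. exists i; reflexivity.
    + apply Hlub. intros x [j ->]. apply Hsep.
Qed.

Lemma limit_of_geometric_increments (x eps : nat -> R) (lo hi : R) :
  lo <= 0 <= hi -> (forall i, 0 <= eps i) -> (forall i, eps (S i) <= eps i / 2) ->
  (forall i, lo * eps i <= x (S i) - x i <= hi * eps i) ->
  exists l, forall i, x i + 2 * lo * eps i <= l <= x i + 2 * hi * eps i.
Proof.
  intros Hlohi Heps Hhalf Hinc.
  apply nested_intervals; intros i;
    specialize (Hinc i); specialize (Hhalf i); pose proof (Heps i); pose proof (Heps (S i)); nra.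
Qed.

(* [decay i = 2 ^ (- 2 ^ i)], i.e. [exp (- c t)] with [c = ln 2] and [t = 2 ^ i]. *)
Definition decay (i : nat) : R := exp (- ln 2 * 2 ^ i).

Lemma decay_pos i : 0 < decay i.
Proof. apply exp_pos. Qed.

Lemma decay_0 : decay 0 = / 2.
Proof. unfold decay. rewrite pow_O, Rmult_1_r, exp_Ropp, exp_ln; lra. Qed.

Lemma decay_S i : decay (S i) = decay i * decay i.
Proof. unfold decay. rewrite <- exp_plus. f_equal. simpl. ring. Qed.

Lemma decay_le_half i : decay i <= / 2.
Proof.
  induction i as [|i IH]; [rewrite decay_0; lra|].
  rewrite decay_S. pose proof (decay_pos i). nra.
Qed.

Lemma decay_S_le i : decay (S i) <= decay i / 2.
Proof. rewrite decay_S. pose proof (decay_pos i). pose proof (decay_le_half i). nra. Qed.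

Lemma pow2_pos i : 0 < 2 ^ i.
Proof. apply pow_lt; lra. Qed.

Lemma exp_INR_mul_ln2 i : exp (INR i * ln 2) = 2 ^ i.
Proof. rewrite <- ln_pow by lra. apply exp_ln, pow2_pos. Qed.


Section DoublingRecursion.
Variables (r alpha : nat -> R).
Hypothesis r_pos : forall i, 0 < r i.
Hypothesis alpha_pos : forall i, 0 < alpha i.
Hypothesis r_step : forall i, r (S i) * (1 + 2 * r (S i)) * (2 + r i) = r i ^ 2.
Hypothesis alpha_step : forall i, alpha (S i) * (1 + 2 * r (S i)) = alpha i * r i ^ 2.
Hypothesis alpha_0 : alpha 0%nat = r 0%nat.
Hypothesis r_0 : / 5 < r 0%nat <= 1.

Let z i := ln (r i) - ln 2.
Let g i := ln (1 + 2 * r (S i)) + ln (1 + r i / 2).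

Lemma ln_ratio_step i : z (S i) = 2 * z i - g i.
Proof.
  pose proof (r_pos i); pose proof (r_pos (S i)).
  assert (Hprod : r (S i) * ((1 + 2 * r (S i)) * (1 + r i / 2)) * 2 = r i * r i).
  { transitivity (r (S i) * (1 + 2 * r (S i)) * (2 + r i)); [field | rewrite r_step; ring]. }
  apply (f_equal ln) in Hprod.
  rewrite !ln_mult in Hprod by nra. unfold z, g. lra.
Qed.

Lemma ln_ratio_0_bounds : -4 <= ln (r 0%nat) <= 0.
Proof.
  split.
  - pose proof (ln_le_sub1 (/ r 0%nat) ltac:(apply Rinv_0_lt_compat; lra)) as H.
    rewrite ln_Rinv in H by lra.
    assert (/ r 0%nat < 5) by (rewrite <- (Rinv_inv 5); apply Rinv_lt_contravar; lra).
    lra.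
  - rewrite <- ln_1. apply ln_le; lra.
Qed.

Lemma g_nonneg i : 0 <= g i.
Proof.
  pose proof (ln_1p_bounds (2 * r (S i))); pose proof (ln_1p_bounds (r i / 2)).
  pose proof (r_pos i); pose proof (r_pos (S i)). unfold g. lra.
Qed.

(* Since [g >= 0], [z (S i) <= 2 * z i], so [z i <= 2 ^ i * z 0 <= - 2 ^ i * ln 2]. *)
Lemma ratio_le_decay i : r i <= 2 * decay i.
Proof.
  assert (Hz : z i <= - ln 2 * 2 ^ i).
  { induction i as [|i IH].
    - pose proof ln_ratio_0_bounds. unfold z. simpl. lra.
    - rewrite ln_ratio_step. pose proof (g_nonneg i). simpl. lra. }
  pose proof (r_pos i).
  replace (r i) with (2 * exp (z i))
    by (unfold z, Rminus; rewrite exp_plus, exp_Ropp, !exp_ln; lra).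
  pose proof (exp_le _ _ Hz). unfold decay. lra.
Qed.

Lemma g_le_decay i : g i <= 3 * decay i.
Proof.
  pose proof (ln_1p_bounds (2 * r (S i))); pose proof (ln_1p_bounds (r i / 2)).
  pose proof (r_pos i); pose proof (r_pos (S i)).
  pose proof (ratio_le_decay i); pose proof (ratio_le_decay (S i)); pose proof (decay_S_le i).
  unfold g. lra.
Qed.

Lemma exists_doubling_exponent :
  exists A, forall i, 0 <= z i + 2 ^ i * A <= 3 * decay i.
Proof.
  destruct (limit_of_geometric_increments (fun i => - z i * / 2 ^ i)
              (fun i => decay i * / 2 ^ i) 0 (3 / 2)) as [A HA]; simpl.
  - lra.
  - intros i. pose proof (decay_pos i); pose proof (Rinv_0_lt_compat _ (pow2_pos i)). nra.
  - intros i. pose proof (decay_S_le i); pose proof (decay_pos i).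
    pose proof (Rinv_0_lt_compat _ (pow2_pos i)). rewrite Rinv_mult. nra.
  - intros i. rewrite ln_ratio_step. pose proof (g_nonneg i); pose proof (g_le_decay i).
    pose proof (Rinv_0_lt_compat _ (pow2_pos i)). rewrite Rinv_mult. nra.
  - exists A. intros i. specialize (HA i). pose proof (pow2_pos i).
    replace (z i + 2 ^ i * A) with (2 ^ i * (A - - z i * / 2 ^ i)) by (field; lra).
    replace (3 * decay i) with (2 ^ i * (3 * (decay i * / 2 ^ i))) by (field; lra).
    split; [apply Rmult_le_pos | apply Rmult_le_compat_l]; lra.
Qed.

Lemma ln_alpha_step i :
  ln (alpha (S i)) = ln (alpha i) + 2 * ln (r i) - ln (1 + 2 * r (S i)).
Proof.
  pose proof (alpha_pos i); pose proof (alpha_pos (S i)).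
  pose proof (r_pos i); pose proof (r_pos (S i)).
  assert (Hprod : alpha (S i) * (1 + 2 * r (S i)) = alpha i * (r i * r i))
    by (rewrite alpha_step; ring).
  apply (f_equal ln) in Hprod. rewrite !ln_mult in Hprod by nra. lra.
Qed.

Lemma exists_scaled_constant A :
  (forall i, 0 <= z i + 2 ^ i * A <= 3 * decay i) ->
  exists lam, forall i,
    - 12 * decay i <= ln (alpha i) - 2 * INR i * ln 2 + 2 * 2 ^ i * A - lam <= 4 * decay i.
Proof.
  intros HA.
  destruct (limit_of_geometric_increments
              (fun i => ln (alpha i) - 2 * INR i * ln 2 + 2 * 2 ^ i * A) decay (-2) 6)
    as [lam Hlam].
  - lra.
  - intros i. left. apply decay_pos.
  - exact decay_S_le.
  - intros i. rewrite ln_alpha_step, S_INR.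
    pose proof (HA i); pose proof (ln_1p_bounds (2 * r (S i))); pose proof (r_pos (S i)).
    pose proof (ratio_le_decay (S i)); pose proof (decay_S_le i).
    unfold z in *. simpl. lra.
  - exists lam. intros i. specialize (Hlam i). lra.
Qed.

Lemma doubling_asymptotics :
  exists A lam, ln 2 <= A <= 7 /\ -1 <= lam <= 15 /\
  forall i, r i <= 2 * decay i /\
    exists e w, - 12 * decay i <= e <= 4 * decay i /\ 0 <= w <= 3 * decay i /\
    r i = 2 * exp (- (2 ^ i * A)) * exp w /\
    alpha i = exp lam * (2 ^ i) ^ 2 * exp (- (2 * 2 ^ i * A)) * exp e.
Proof.
  destruct exists_doubling_exponent as [A HA].
  destruct (exists_scaled_constant A HA) as [lam Hlam].
  exists A, lam.
  pose proof (HA 0%nat) as HA0; pose proof (Hlam 0%nat) as Hlam0.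
  pose proof ln_ratio_0_bounds; pose proof ln2_bounds.
  unfold z in HA0. rewrite decay_0 in HA0, Hlam0. rewrite alpha_0 in Hlam0.
  simpl in HA0, Hlam0.
  split; [lra|]. split; [lra|].
  intros i. split; [apply ratio_le_decay|].
  exists (ln (alpha i) - 2 * INR i * ln 2 + 2 * 2 ^ i * A - lam), (z i + 2 ^ i * A).
  pose proof (r_pos i); pose proof (alpha_pos i).
  split; [apply Hlam|]. split; [apply HA|]. split.
  - rewrite Rmult_assoc, <- exp_plus.
    replace (- (2 ^ i * A) + (z i + 2 ^ i * A)) with (ln (r i) + - ln 2) by (unfold z; ring).
    rewrite exp_plus, exp_Ropp, !exp_ln; [field| |]; lra.
  - transitivity (exp (ln (alpha i))); [rewrite exp_ln; lra|].
    rewrite <- (exp_INR_mul_ln2 i) at 1.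
    replace (exp (INR i * ln 2) ^ 2) with (exp (INR i * ln 2) * exp (INR i * ln 2)) by ring.
    rewrite <- !exp_plus. f_equal. ring.
Qed.
End DoublingRecursion.


Section ABMNIncrements.
Variables a b m n : Z -> R.
Hypothesis sol : positive_ABMN_solution a b m n.

Lemma ABMN_pos p : 0 < a p /\ 0 < b p.
Proof. apply sol. Qed.

Lemma ABMN_m_incr_succ p : m (p + 1)%Z - m p = 2 * a p + b p.
Proof.
  destruct (proj1 sol p) as (_ & _ & Hm & _ & Hmm & _). pose proof (ABMN_pos p).
  apply (Rmult_eq_reg_l (a p + b p)); [nra | lra].
Qed.

Lemma ABMN_m_incr p : m p - m (p - 1)%Z = a p ^ 2 / b p.
Proof.
  destruct (proj1 sol p) as (_ & _ & _ & _ & Hmm & _). pose proof (ABMN_pos p).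
  pose proof (ABMN_m_incr_succ p).
  apply (Rmult_eq_reg_l (b p)); [field_simplify; nra | lra].
Qed.

Lemma ABMN_n_incr p : n (p - 1)%Z - n p = a p + 2 * b p.
Proof.
  destruct (proj1 sol p) as (_ & _ & _ & Hn & _ & Hnn). pose proof (ABMN_pos p).
  apply (Rmult_eq_reg_l (a p + b p)); [nra | lra].
Qed.

Lemma ABMN_n_incr_succ p : n p - n (p + 1)%Z = b p ^ 2 / a p.
Proof.
  destruct (proj1 sol p) as (_ & _ & _ & _ & _ & Hnn). pose proof (ABMN_pos p).
  pose proof (ABMN_n_incr p).
  apply (Rmult_eq_reg_l (a p)); [field_simplify; nra | lra].
Qed.

Lemma ABMN_step p :
  2 * a p + b p = a (p + 1)%Z ^ 2 / b (p + 1)%Z /\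
  a (p + 1)%Z + 2 * b (p + 1)%Z = b p ^ 2 / a p.
Proof.
  pose proof (ABMN_m_incr_succ p); pose proof (ABMN_m_incr (p + 1)%Z).
  pose proof (ABMN_n_incr_succ p); pose proof (ABMN_n_incr (p + 1)%Z).
  replace (p + 1 - 1)%Z with p in * by lia.
  split; lra.
Qed.

Lemma ABMN_ratio_step p :
  let r q := b q / a q in
  r (p + 1)%Z * (1 + 2 * r (p + 1)%Z) * (2 + r p) = r p ^ 2.
Proof.
  intros r. unfold r.
  destruct (ABMN_pos p), (ABMN_pos (p + 1)%Z), (ABMN_step p) as [Hm Hn].
  replace (1 + 2 * (b (p + 1)%Z / a (p + 1)%Z)) with ((a (p + 1)%Z + 2 * b (p + 1)%Z) / a (p + 1)%Z)
    by (field; lra).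
  replace (2 + b p / a p) with ((2 * a p + b p) / a p) by (field; lra).
  rewrite Hm, Hn. field. lra.
Qed.

Lemma ABMN_a_step p :
  a (p + 1)%Z * (1 + 2 * (b (p + 1)%Z / a (p + 1)%Z)) = a p * (b p / a p) ^ 2.
Proof.
  destruct (ABMN_pos p), (ABMN_pos (p + 1)%Z), (ABMN_step p) as [_ Hn].
  transitivity (a (p + 1)%Z + 2 * b (p + 1)%Z); [field; lra|].
  rewrite Hn. field. lra.
Qed.

Lemma ABMN_phi p : phi m n p = b p / a p + 2 * (b p / a p) ^ 2.
Proof.
  unfold phi. rewrite ABMN_m_incr, ABMN_n_incr. destruct (ABMN_pos p). field. lra.
Qed.

Lemma ABMN_battlefield_asymptotics k :
  in_battlefield_range (phi m n k) ->
  let D := m k - m (k - 1)%Z in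
  exists A lam, ln 2 <= A <= 7 /\ -1 <= lam <= 15 /\
  forall i, let j := (k + Z.of_nat i)%Z in
    b j / a j <= 2 * decay i /\
    exists e w, - 12 * decay i <= e <= 4 * decay i /\ 0 <= w <= 3 * decay i /\
    b j / a j = 2 * exp (- (2 ^ i * A)) * exp w /\
    a j / D = exp lam * (2 ^ i) ^ 2 * exp (- (2 * 2 ^ i * A)) * exp e.
Proof.
  intros Hk D.
  set (r i := b (k + Z.of_nat i)%Z / a (k + Z.of_nat i)%Z).
  set (alpha i := a (k + Z.of_nat i)%Z / D).
  assert (HD : D = a k ^ 2 / b k) by apply ABMN_m_incr.
  assert (D_pos : 0 < D) by (destruct (ABMN_pos k); rewrite HD; apply Rdiv_lt_0_compat; nra).
  assert (r_pos : forall i, 0 < r i).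
  { intros i. destruct (ABMN_pos (k + Z.of_nat i)). apply Rdiv_lt_0_compat; lra. }
  assert (alpha_pos : forall i, 0 < alpha i).
  { intros i. destruct (ABMN_pos (k + Z.of_nat i)). apply Rdiv_lt_0_compat; lra. }
  assert (Hsucc : forall i, (k + Z.of_nat (S i))%Z = (k + Z.of_nat i + 1)%Z) by (intros; lia).
  assert (r_step : forall i, r (S i) * (1 + 2 * r (S i)) * (2 + r i) = r i ^ 2).
  { intros i. unfold r. rewrite Hsucc. apply ABMN_ratio_step. }
  assert (alpha_step : forall i, alpha (S i) * (1 + 2 * r (S i)) = alpha i * r i ^ 2).
  { intros i. unfold alpha, r. rewrite Hsucc.
    pose proof (ABMN_a_step (k + Z.of_nat i)) as Hstep.
    unfold Rdiv in *.
    rewrite (Rmult_comm _ (/ D)), (Rmult_comm (a _) (/ D)), !Rmult_assoc, Hstep.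
    reflexivity. }
  assert (alpha_0 : alpha 0%nat = r 0%nat).
  { unfold alpha, r. rewrite Z.add_0_r, HD. destruct (ABMN_pos k). field. lra. }
  assert (r_0 : / 5 < r 0%nat <= 1).
  { destruct Hk as [Hlo Hhi]. rewrite ABMN_phi in Hlo, Hhi.
    pose proof (r_pos 0%nat). unfold r in *. rewrite Z.add_0_r in *. split; nra. }
  exact (doubling_asymptotics r alpha r_pos alpha_pos r_step alpha_step alpha_0 r_0).
Qed.

Lemma ABMN_battlefield_profile k :
  in_battlefield_range (phi m n k) ->
  exists A F, ln 2 <= A <= 7 /\ exp (-1) / 2 <= F <= exp 15 / 2 /\
  forall i, let D := m k - m (k - 1)%Z in let T := 2 ^ i in let j := (k + Z.of_nat i)%Z in
    exists e1 e2 e3 e4,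
      Rabs e1 <= 16 * decay i /\ Rabs e2 <= 16 * decay i /\
      Rabs e3 <= 16 * decay i /\ Rabs e4 <= 16 * decay i /\
      a j = D * (2 * F) * T ^ 2 * exp (- (2 * T * A)) * exp e1 /\
      b j = D * (4 * F) * T ^ 2 * exp (- (3 * T * A)) * exp e2 /\
      m j - m (j - 1)%Z = D * F * T ^ 2 * exp (- (T * A)) * exp e3 /\
      n (j - 1)%Z - n j = D * (2 * F) * T ^ 2 * exp (- (2 * T * A)) * exp e4.
Proof.
  intros Hk.
  destruct (ABMN_battlefield_asymptotics k Hk) as (A & lam & HA & Hlam & Hasym).
  exists A, (exp lam / 2).
  split; [lra|]. split; [split; apply Rmult_le_compat_r, exp_le; lra|].
  intros i D T j.
  destruct (Hasym i) as (Hri & e & w & He & Hw & Hr & Ha).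
  fold D T j in Hri, Hr, Ha.
  assert (D_pos : 0 < D).
  { unfold D. rewrite ABMN_m_incr. destruct (ABMN_pos k). apply Rdiv_lt_0_compat; nra. }
  destruct (ABMN_pos j) as [Haj Hbj].
  assert (Hrj : 0 < b j / a j) by (apply Rdiv_lt_0_compat; lra).
  pose proof (ln_1p_bounds (2 * (b j / a j)) ltac:(lra)).
  exists e, (e + w), (e - w), (e + ln (1 + 2 * (b j / a j))).
  split; [|split; [|split; [|split]]]; try (apply Rabs_le; lra).
  set (X := exp (- (T * A))).
  assert (X2 : exp (- (2 * T * A)) = X * X) by (unfold X; rewrite <- exp_plus; f_equal; ring).
  assert (X3 : exp (- (3 * T * A)) = X * X * X) by (unfold X; rewrite <- !exp_plus; f_equal; ring).
  assert (Ha' : a j = D * (a j / D)) by (field; lra).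
  assert (Hb : b j = D * (a j / D) * (b j / a j)) by (field; lra).
  rewrite Ha, Hr in Hb. rewrite Ha in Ha'.
  rewrite Hr, ABMN_m_incr, ABMN_n_incr, Hb, Ha', X2, X3. fold X.
  pose proof (exp_pos e); pose proof (exp_pos w); pose proof (exp_pos lam).
  assert (0 < X) by apply exp_pos. assert (0 < T) by apply pow2_pos.
  unfold Rminus. rewrite !exp_plus, (exp_Ropp w), exp_ln by nra.
  repeat split; field; lra.
Qed.
End ABMNIncrements.


Theorem mainTheorem6 :
  exists kappa1 kappa2 c C : R,
    0 < kappa1 /\ kappa1 < kappa2 /\ 0 < c /\ 0 < C /\
    forall (a b m n : Z -> R) (k : Z),
      positive_ABMN_solution a b m n ->
      battlefield_index m n k ->
      exists A F : R,
        kappa1 <= A <= kappa2 /\ kappa1 <= F <= kappa2 /\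
        forall j : Z, (k <= j)%Z ->
          let D := m k - m (k - 1)%Z in
          let t := pow2Z (j - k) in
          exists e1 e2 e3 e4 : R,
            Rabs e1 <= C * exp (- c * t) /\
            Rabs e2 <= C * exp (- c * t) /\
            Rabs e3 <= C * exp (- c * t) /\
            Rabs e4 <= C * exp (- c * t) /\
            a j = D * (2 * F) * t ^ 2 * exp (- (2 * t * A)) * (1 + e1) /\
            b j = D * (4 * F) * t ^ 2 * exp (- (3 * t * A)) * (1 + e2) /\
            m j - m (j - 1)%Z = D * F * t ^ 2 * exp (- (t * A)) * (1 + e3) /\
            n (j - 1)%Z - n j = D * (2 * F) * t ^ 2 * exp (- (2 * t * A)) * (1 + e4).
Proof.
  pose proof ln2_bounds as Hln2. pose proof (exp_pos (-1)) as Hexp1.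
  assert (exp (-1) <= 1) by (rewrite <- exp_0; apply exp_le; lra).
  assert (7 <= exp 15) by (pose proof (exp_ineq1_le 15); lra).
  exists (exp (-1) / 2), (exp 15), (ln 2), (exp 8 * 16).
  split; [lra|]. split; [lra|]. split; [lra|]. split; [pose proof (exp_pos 8); lra|].
  intros a b m n k Hsol [Hk _].
  destruct (ABMN_battlefield_profile a b m n Hsol k Hk) as (A & F & HA & HF & Hprof).
  exists A, F. split; [lra|]. split; [pose proof (exp_pos 15); lra|].
  intros j Hj D t.
  set (i := Z.to_nat (j - k)) in t.
  change t with (2 ^ i). change (exp (- ln 2 * 2 ^ i)) with (decay i).
  destruct (Hprof i) as (e1 & e2 & e3 & e4 & He1 & He2 & He3 & He4 & Ha & Hb & Hm & Hn).
  replace (k + Z.of_nat i)%Z with j in * by lia.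
  assert (Hbound : forall e, Rabs e <= 16 * decay i -> Rabs (exp e - 1) <= exp 8 * 16 * decay i).
  { intros e He. rewrite Rmult_assoc. apply Rabs_exp_sub1_le_bound; [exact He|].
    pose proof (decay_le_half i). lra. }
  exists (exp e1 - 1), (exp e2 - 1), (exp e3 - 1), (exp e4 - 1).
  rewrite !Rplus_minus.
  repeat split; auto.
Qed.
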